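(* Let $G=(V,E)$ be a connected undirected unweighted graph on $N$ vertices and let $r>1$. For every mutant set $S$ with $\emptyset\ne S\ne V$ and every edge $\{u,v\}\in E$ with $u\in S$, $v\notin S$, $$\psi_{u,v}^{\delta=1/2}(S):=\frac12\cdot\frac{1}{w(S)}\left(\frac{r}{\deg(u)}-\frac{1}{\deg(v)}\right)+\frac12\cdot\frac1N\left(\frac{r}{w_v(S)}-\frac{1}{w_u(S)}\right)\ \ge\ \frac{r-1}{rN^3},$$ and moreover $\mathsf{AT}_r^{\delta=1/2}(G)\le\frac{r}{r-1}\cdot N^4$.
   Context: Mixed $\delta$-updating on $G$: each vertex holds a mutant (fitness $r$) or wild-type (fitness $1$); $f_S(x)\in\{1,r\}$ is the fitness at $x$ when $S$ is the mutant set. At each step, with probability $\delta$ a death-Birth step: choose $v$ uniformly to die, choose a neighbor $u$ of $v$ with probability proportional to $f_S(u)$, $u$ copies its type onto $v$; with probability $1-\delta$ a Birth-death step: choose $u$ with probability proportional to $f_S(u)$ among all vertices, choose a uniformly random neighbor $v$ of $u$, $u$ copies its type onto $v$. Notation: $w(S)=\sum_{x\in V}f_S(x)=N+(r-1)|S|$, and $w_x(S)=\sum_{y:\{x,y\}\in E}f_S(y)$ is the total fitness of the neighbors of $x$. $\mathsf{AT}_r^\delta(G,S_0)$ is the expected number of steps until the population is all mutant or all wild-type starting from $S_0$, and $\mathsf{AT}_r^\delta(G)=\max_{S_0\subseteq V}\mathsf{AT}_r^\delta(G,S_0)$. *)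

From HB Require Import structures.
From mathcomp Require Import all_boot all_order all_algebra.
From mathcomp Require Import all_classical all_reals all_analysis.
Set Implicit Arguments. Unset Strict Implicit. Unset Printing Implicit Defensive.
Import Order.TTheory GRing.Theory Num.Theory.
Local Open Scope ring_scope.

Section Moran.
Variables (R : realType) (T : finType) (e : rel T).

Definition NN : R := #|T|%:R.

Definition nbrs (x : T) : {set T} := [set y | e x y].
Definition deg (x : T) : R := #|nbrs x|%:R.

Definition fit (r : R) (S : {set T}) (x : T) : R := if x \in S then r else 1.
Definition wtot (r : R) (S : {set T}) : R := \sum_(x : T) fit r S x.
Definition wnb (r : R) (S : {set T}) (x : T) : R := \sum_(y in nbrs x) fit r S y.

Definition psi_half (r : R) (S : {set T}) (u v : T) : R :=
  2^-1 * ((wtot r S)^-1 * (r / deg u - 1 / deg v))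
  + 2^-1 * (NN^-1 * (r / wnb r S v - 1 / wnb r S u)).

(* state after u copies its type onto v *)
Definition upd (S : {set T}) (u v : T) : {set T} :=
  if u \in S then v |: S else S :\ v.

Definition trans (delta r : R) (S S' : {set T}) : R :=
  delta * (\sum_(v : T) \sum_(u in nbrs v)
              NN^-1 * (fit r S u / wnb r S v) * (upd S u v == S')%:R)
  + (1 - delta) * (\sum_(u : T) \sum_(v in nbrs u)
              (fit r S u / wtot r S) * (deg u)^-1 * (upd S u v == S')%:R).

Fixpoint distr (delta r : R) (t : nat) (S0 S : {set T}) : R :=
  match t with
  | 0 => (S0 == S)%:R
  | t'.+1 => \sum_(S1 : {set T}) distr delta r t' S0 S1 * trans delta r S1 S
  end.

Definition absorbed (S : {set T}) : bool := (S == finset.set0) || (S == [set: T]).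

Definition surv (delta r : R) (S0 : {set T}) (t : nat) : R :=
  \sum_(S : {set T} | ~~ absorbed S) distr delta r t S0 S.

(* AT_r^delta(G, S0) = E[absorption time] = sum_{t>=0} P(T > t), in \bar R *)
Definition AT (delta r : R) (S0 : {set T}) : \bar R :=
  (\sum_(0 <= t <oo) (surv delta r S0 t)%:E)%E.

End Moran.

Definition simple_connected_graph (T : finType) (e : rel T) : Prop :=
  symmetric e /\ irreflexive e /\ (forall x y : T, connect e x y).

From mathcomp Require Import all_boot all_order all_algebra.
From mathcomp Require Import all_classical all_reals all_analysis.
From mathcomp Require Import ring lra.
Import Order.TTheory GRing.Theory Num.Theory.
Local Open Scope ring_scope.

(* The number of mutants |S_t| drifts upwards.  A step changes |S| by +-1
   along an edge joining S to its complement, so the expected increment of |S|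
   is the sum of psi_{u,v}(S) over the boundary edges {u,v} of S.  The bounds
   N <= w(S) <= rN and deg x <= w_x(S) <= r deg x give psi >= (r-1)/(2rN^2)
   >= c := (r-1)/(rN^3), and a non-absorbed S of a connected graph has a
   boundary edge.  Hence E|S_{t+1}| >= E|S_t| + c P(S_t not absorbed); since
   0 <= |S_t| <= N, summing over t gives c AT <= N. *)

Set Implicit Arguments. Unset Strict Implicit.

Lemma sum_indicator (R : pzSemiRingType) (J : finType) (g : J -> R) (j : J) :
  \sum_(j' : J) (j == j')%:R * g j' = g j.
Proof.
rewrite (bigD1 j) //= eqxx mul1r big1 ?addr0 // => j' /negbTE.
by rewrite eq_sym => ->; rewrite mul0r.
Qed.

Lemma ler_sum_term (R : numDomainType) (I : finType) (F : I -> R) (i : I) :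
  (forall j, 0 <= F j) -> F i <= \sum_(j : I) F j.
Proof. by move=> F_ge0; rewrite (bigD1 i) //= lerDl sumr_ge0. Qed.

Lemma nneseries_ub (R : realType) (u : nat -> R) (B : R) :
  (forall n, 0 <= u n) -> (forall k, \sum_(0 <= i < k) u i <= B) ->
  (\sum_(0 <= t <oo) (u t)%:E <= B%:E)%E.
Proof.
move=> u_ge0 u_ub; apply: (lime_le (is_cvg_nneseries _)) => [n _ _|].
  by rewrite lee_fin.
by apply: nearW => k /=; rewrite sumEFin lee_fin.
Qed.

Section Graph.
Variables (T : finType) (e : rel T).

Lemma edge_card_gt1 u v : irreflexive e -> e u v -> (1 < #|T|)%N.
Proof.
move=> e_irr euv; apply/card_gt1P; exists u, v; split => //.
by apply: contraTneq euv => ->; rewrite e_irr.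
Qed.

Hypothesis e_connected : forall x y : T, connect e x y.

Lemma boundary_edge (S : {set T}) :
  S != finset.set0 -> S != [set: T] -> exists u v, [/\ e u v, u \in S & v \notin S].
Proof.
move=> /set0Pn[x xS]; rewrite -properT => /properP[_ [y _ yS]].
have /connectP[p] := e_connected x y.
elim: p x xS => [|z p IH] x xS /=; first by move=> _ yx; rewrite yx xS in yS.
case/andP=> exz pz yl; have [zS|zS] := boolP (z \in S); first exact: IH pz yl.
by exists x, z.
Qed.

Lemma connected_nbr : (1 < #|T|)%N -> forall x, exists y, e x y.
Proof.
move=> T_gt1 x.
have xT : [set x] != [set: T].
  by apply: contraTneq T_gt1 => xT; rewrite -cardsT -xT cards1.
have x0 : [set x] != finset.set0 by apply/set0Pn; exists x; rewrite inE.
have [u [v [euv /set1P <- _]]] := boundary_edge x0 xT.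
by exists v.
Qed.

End Graph.

Lemma net_flow_ge (R : realFieldType) (r N W du dv A B : R) :
  1 <= r -> 0 < du <= N -> 0 < dv <= N -> N <= W <= r * N -> du <= B -> 0 < A <= r * dv ->
  (r - 1) / (r * N ^+ 2) <= W^-1 * (r / du - 1 / dv) + N^-1 * (r / A - 1 / B).
Proof.
move=> r_ge1 /andP[du_gt0 duN] /andP[dv_gt0 dvN] /andP[NW WrN] duB /andP[A_gt0 Ar].
have N_gt0 : 0 < N by lra.
have -> : (r - 1) / (r * N ^+ 2) = N^-1 * (r - 1) * (r^-1 * N^-1).
  by field; apply/andP; split; lra.
rewrite !div1r.
have inv_le (x y : R) : 0 < x -> x <= y -> y^-1 <= x^-1.
  by move=> x_gt0 xy; rewrite lef_pV2 ?posrE //; lra.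
have b_rp : dv^-1 <= r * A^-1.
  by rewrite -[r]invrK -invfM inv_le ?mulr_gt0 ?invr_gt0 ?ler_pdivrMl; lra.
have q_a : B^-1 <= du^-1 by exact: inv_le.
have n_a : N^-1 <= du^-1 by exact: inv_le.
have n_b : N^-1 <= dv^-1 by exact: inv_le.
have w_n : W^-1 <= N^-1 by exact: inv_le.
have n_rw : N^-1 <= r * W^-1.
  by rewrite -[r]invrK -invfM inv_le ?mulr_gt0 ?invr_gt0 ?ler_pdivrMl; lra.
have s_w : r^-1 * N^-1 <= W^-1 by rewrite -invfM inv_le ?mulr_gt0; lra.
set a := du^-1 in q_a n_a *; set b := dv^-1 in b_rp n_b *.
set n := N^-1 in n_a n_b w_n n_rw s_w *; set w := W^-1 in w_n n_rw s_w *.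
set p := A^-1 in b_rp *; set q := B^-1 in q_a *; set s := _ * n in s_w *.
(* a (r w - n) + b (n - w) >= n (r w - n) + n (n - w) = (r - 1) n w *)
have n_ge0 : 0 <= n by rewrite invr_ge0; lra.
have : 0 <= n * (r * p - b) by apply: mulr_ge0; lra.
have : 0 <= n * (a - q) by apply: mulr_ge0; lra.
have : 0 <= (a - n) * (r * w - n) by apply: mulr_ge0; lra.
have : 0 <= (b - n) * (n - w) by apply: mulr_ge0; lra.
have : 0 <= n * (r - 1) * (w - s) by apply: mulr_ge0; [apply: mulr_ge0|]; lra.
lra.
Qed.

Section Moran.
Variables (R : realType) (T : finType) (e : rel T).
Local Notation N := (NN R T).

Lemma deg_gt0 u v : e u v -> 0 < deg R e u.
Proof. by move=> euv; rewrite ltr0n; apply/card_gt0P; exists v; rewrite inE. Qed.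

Lemma deg_le_card u : deg R e u <= N.
Proof. by rewrite ler_nat max_card. Qed.

Lemma sum_nbrs_sym (F : T -> T -> R) : symmetric e ->
  \sum_v \sum_(u in nbrs e v) F u v = \sum_u \sum_(v in nbrs e u) F u v.
Proof.
move=> e_sym; under eq_bigr do rewrite big_mkcond /=.
rewrite exchange_big /=; apply: eq_bigr => u _; rewrite [RHS]big_mkcond.
by apply: eq_bigr => v _; rewrite !inE e_sym.
Qed.

Definition psi (delta r : R) (S : {set T}) (u v : T) : R :=
  (1 - delta) * ((wtot r S)^-1 * (r / deg R e u - 1 / deg R e v))
  + delta * (N^-1 * (r / wnb e r S v - 1 / wnb e r S u)).

Lemma psi_halfE r S u v : psi_half e r S u v = psi 2^-1 r S u v.
Proof. by rewrite /psi_half /psi; have -> : 1 - 2^-1 = 2^-1 :> R by field. Qed.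

Lemma sum_nbrs_card_upd (F : T -> T -> R) (S : {set T}) : symmetric e ->
  \sum_u \sum_(v in nbrs e u) F u v * (#|upd S u v|%:R - #|S|%:R) =
  \sum_u \sum_v ((e u v) && (u \in S) && (v \notin S))%:R * (F u v - F v u).
Proof.
move=> e_sym; pose p u v : R := ((u \in S) && (v \notin S))%:R.
have card_upd u v : #|upd S u v|%:R - #|S|%:R = p u v - p v u.
  rewrite /upd /p; case: ifP => uS; rewrite /= ?andbT ?andbF ?subr0 ?sub0r.
    by rewrite cardsU1 natrD addrK.
  by rewrite [in #|S|](cardsD1 v) natrD; ring.
rewrite (eq_bigr (fun u => \sum_v (e u v)%:R * F u v * p u v
                          - \sum_v (e u v)%:R * F u v * p v u)); last first.
  move=> u _; rewrite -sumrB big_mkcond /=; apply: eq_bigr => v _.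
  by rewrite inE card_upd; case: (e u v); rewrite /= ?mul1r ?mul0r ?subrr // mulrBr.
rewrite sumrB [X in _ - X]exchange_big /= -sumrB; apply: eq_bigr => u _.
rewrite -sumrB; apply: eq_bigr => v _; rewrite (e_sym v u) /p.
by case: (e u v) (u \in S) (v \in S) => [] [] []; rewrite /= ?mul1r ?mul0r ?mulr1 ?mulr0 ?subr0.
Qed.

Section Transitions.
Variables (delta r : R).

Lemma trans_expect (S : {set T}) (g : {set T} -> R) :
  \sum_S' trans e delta r S S' * g S' =
  delta * \sum_v \sum_(u in nbrs e v) N^-1 * (fit r S u / wnb e r S v) * g (upd S u v)
  + (1 - delta) * \sum_u \sum_(v in nbrs e u) fit r S u / wtot r S * (deg R e u)^-1 * g (upd S u v).
Proof.
have expect_moves (F : T -> T -> R) (h : T -> T -> {set T}) :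
    \sum_S' (\sum_a \sum_(b in nbrs e a) F a b * (h a b == S')%:R) * g S'
    = \sum_a \sum_(b in nbrs e a) F a b * g (h a b).
  under eq_bigr do rewrite mulr_suml.
  rewrite exchange_big /=; apply: eq_bigr => a _.
  under eq_bigr do rewrite mulr_suml.
  rewrite exchange_big /=; apply: eq_bigr => b _.
  by under eq_bigr do rewrite -mulrA; rewrite -mulr_sumr sum_indicator.
rewrite /trans; under eq_bigr do rewrite mulrDl -!mulrA.
by rewrite big_split /= -!mulr_sumr !expect_moves.
Qed.

Lemma trans_drift (S : {set T}) : symmetric e ->
  \sum_S' trans e delta r S S' * (#|S'|%:R - #|S|%:R) =
  \sum_u \sum_v ((e u v) && (u \in S) && (v \notin S))%:R * psi delta r S u v.
Proof.
move=> e_sym; rewrite trans_expect (sum_nbrs_sym _ e_sym) !sum_nbrs_card_upd //.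
rewrite !mulr_sumr -big_split; apply: eq_bigr => u _.
rewrite !mulr_sumr -big_split; apply: eq_bigr => v _ /=.
case: (boolP (_ && _)) => [/andP[/andP[_ uS] vS]|_]; last by rewrite !mul0r !mulr0 addr0.
by rewrite /psi /fit uS (negbTE vS) !mul1r; ring.
Qed.

End Transitions.

Section Fitness.
Variable r : R.
Hypothesis r_ge1 : 1 <= r.
Let r_gt0 : 0 < r := lt_le_trans ltr01 r_ge1.

Lemma fit_bounds (S : {set T}) (x : T) : 1 <= fit r S x <= r.
Proof. by rewrite /fit; case: ifP => _; rewrite lexx r_ge1. Qed.

Lemma wtot_bounds (S : {set T}) : N <= wtot r S <= r * N.
Proof.
rewrite /wtot /NN -sum1_card natr_sum mulr_sumr.
by apply/andP; split; apply: ler_sum => x _; case/andP: (fit_bounds S x); rewrite ?mulr1.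
Qed.

Lemma wnb_bounds (S : {set T}) (x : T) : deg R e x <= wnb e r S x <= r * deg R e x.
Proof.
rewrite /wnb /deg -sum1_card natr_sum mulr_sumr.
by apply/andP; split; apply: ler_sum => y _; case/andP: (fit_bounds S y); rewrite ?mulr1.
Qed.

Lemma wnb_gt0 (S : {set T}) x y : e x y -> 0 < wnb e r S x.
Proof.
move=> exy; apply: lt_le_trans (deg_gt0 exy) _.
by case/andP: (wnb_bounds S x).
Qed.

Lemma wtot_gt0 (S : {set T}) : (0 < #|T|)%N -> 0 < wtot r S.
Proof.
move=> T_gt0; apply: lt_le_trans (_ : 0 < N) _; first by rewrite ltr0n.
by case/andP: (wtot_bounds S).
Qed.

Lemma trans_ge0 (delta : R) (S S' : {set T}) :
  0 <= delta <= 1 -> 0 <= trans e delta r S S'.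
Proof.
move=> /andP[delta_ge0 delta_le1].
have fit_ge0 x : 0 <= fit r S x by case/andP: (fit_bounds S x) => fit_ge1 _; lra.
rewrite /trans addr_ge0 // mulr_ge0 ?subr_ge0 // !sumr_ge0 // => x _; rewrite sumr_ge0 // => y _;
  by rewrite !mulr_ge0 ?invr_ge0 ?ler0n ?fit_ge0 ?sumr_ge0.
Qed.

Lemma trans_sum1 (delta : R) (S : {set T}) :
  (0 < #|T|)%N -> (forall x, exists y, e x y) -> \sum_S' trans e delta r S S' = 1.
Proof.
move=> T_gt0 e_nbr.
rewrite -(eq_bigr _ (fun S' _ => mulr1 (trans e delta r S S'))) trans_expect.
have dB_sum1 : \sum_v \sum_(u in nbrs e v) N^-1 * (fit r S u / wnb e r S v) * 1 = 1.
  rewrite (eq_bigr (fun _ => N^-1)).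
    by rewrite sumr_const -mulr_natr -[#|_|]/#|T| mulVf ?gt_eqF ?ltr0n.
  move=> v _; have [y evy] := e_nbr v.
  under eq_bigr do rewrite mulr1 mulrA.
  by rewrite -mulr_suml -mulr_sumr -/(wnb e r S v) mulfK ?gt_eqF ?(wnb_gt0 S evy).
have Bd_sum1 : \sum_u \sum_(v in nbrs e u) fit r S u / wtot r S * (deg R e u)^-1 * 1 = 1.
  rewrite (eq_bigr (fun u => fit r S u / wtot r S)).
    by rewrite -mulr_suml mulfV ?gt_eqF ?wtot_gt0.
  move=> u _; have [y euy] := e_nbr u.
  rewrite sumr_const -mulr_natr -/(deg R e u) mulr1 -mulrA.
  by rewrite mulVf ?mulr1 ?gt_eqF ?(deg_gt0 euy).
by rewrite [X in delta * X]dB_sum1 [X in (1 - delta) * X]Bd_sum1 !mulr1 addrC subrK.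
Qed.

Lemma psi_half_ge (S : {set T}) u v : symmetric e -> e u v ->
  2^-1 * ((r - 1) / (r * N ^+ 2)) <= psi_half e r S u v.
Proof.
move=> e_sym euv; have evu : e v u by rewrite e_sym.
rewrite /psi_half -mulrDr ler_wpM2l ?invr_ge0 ?ler0n //.
apply: net_flow_ge;
  rewrite ?(deg_gt0 euv) ?(deg_gt0 evu) ?deg_le_card ?wtot_bounds ?(wnb_gt0 S evu) //.
- by case/andP: (wnb_bounds S u).
- by case/andP: (wnb_bounds S v).
Qed.

Lemma psi_half_ge_cube (S : {set T}) u v : symmetric e -> irreflexive e -> e u v ->
  (r - 1) / (r * N ^+ 3) <= psi_half e r S u v.
Proof.
move=> e_sym e_irr euv; apply: le_trans (psi_half_ge S e_sym euv).
have N_ge2 : 2 <= N by rewrite (ler_nat _ 2) (edge_card_gt1 e_irr euv).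
have rN2_ge0 : 0 <= r * N ^+ 2 by rewrite mulr_ge0 ?exprn_ge0 ?ler0n ?(ltW r_gt0).
have N_gt0 : 0 < N by lra.
rewrite [2^-1 * _]mulrCA ler_wpM2l ?subr_ge0 //.
rewrite -invfM lef_pV2 ?posrE ?mulr_gt0 ?exprn_gt0 ?r_gt0 //.
have : 0 <= r * N ^+ 2 * (N - 2) by rewrite mulr_ge0 ?subr_ge0.
lra.
Qed.

Lemma card_drift_half (S : {set T}) :
  symmetric e -> irreflexive e -> (forall x y, connect e x y) ->
  (r - 1) / (r * N ^+ 3) * (~~ absorbed S)%:R
  <= \sum_S' trans e 2^-1 r S S' * (#|S'|%:R - #|S|%:R).
Proof.
move=> e_sym e_irr e_conn; rewrite trans_drift //.
have c_ge0 : 0 <= (r - 1) / (r * N ^+ 3).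
  by rewrite divr_ge0 ?subr_ge0 ?mulr_ge0 ?exprn_ge0 ?ler0n ?(ltW r_gt0).
have term_ge0 u v : 0 <= ((e u v) && (u \in S) && (v \notin S))%:R * psi 2^-1 r S u v.
  case: (boolP (_ && _)) => [/andP[/andP[euv _] _]|_]; last by rewrite mul0r.
  by rewrite mul1r -psi_halfE (le_trans c_ge0) ?psi_half_ge_cube.
have [_|] := boolP (absorbed S); first by rewrite mulr0 sumr_ge0 // => u _; rewrite sumr_ge0.
rewrite negb_or => /andP[S_neq0 S_neqT]; rewrite mulr1.
have [u [v [euv uS vS]]] := boundary_edge e_conn S_neq0 S_neqT.
apply: le_trans (ler_sum_term u _) => [|u']; last by rewrite sumr_ge0.
apply: le_trans (ler_sum_term v _) => //.
by rewrite euv uS vS mul1r -psi_halfE psi_half_ge_cube.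
Qed.

End Fitness.
End Moran.

Lemma absorbed_card_le1 (T : finType) (S : {set T}) : (#|T| <= 1)%N -> absorbed S.
Proof.
move=> T_le1; rewrite /absorbed; have [->|[x xS]] := set_0Vmem S; first by rewrite eqxx.
apply/orP; right; rewrite eqEcard finset.subsetT cardsT (leq_trans T_le1) // card_gt0.
by apply/set0Pn; exists x.
Qed.

Section AbsorptionTime.
Variables (R : realType) (T : finType) (e : rel T) (delta r c : R).
Local Notation N := (NN R T).
Local Notation P := (trans e delta r).

Hypothesis P_ge0 : forall S S', 0 <= P S S'.
Hypothesis P_sum1 : forall S, \sum_S' P S S' = 1.
Hypothesis card_drift :
  forall S, c * (~~ absorbed S)%:R <= \sum_S' P S S' * (#|S'|%:R - #|S|%:R).

Lemma distr_ge0 t S0 S : 0 <= distr e delta r t S0 S.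
Proof.
elim: t S => [|t IH] S /=; first exact: ler0n.
by rewrite sumr_ge0 // => S1 _; rewrite mulr_ge0.
Qed.

Lemma distr_sum1 t S0 : \sum_S distr e delta r t S0 S = 1.
Proof.
elim: t => [|t IH] /=.
  by under eq_bigr do rewrite -[_%:R]mulr1; rewrite sum_indicator.
rewrite exchange_big -[RHS]IH; apply: eq_bigr => S1 _.
by rewrite -mulr_sumr P_sum1 mulr1.
Qed.

Definition mean_card t S0 : R := \sum_S distr e delta r t S0 S * #|S|%:R.

Lemma mean_card_bounds t S0 : 0 <= mean_card t S0 <= N.
Proof.
rewrite sumr_ge0 => [|S _]; last by rewrite mulr_ge0 ?distr_ge0.
rewrite -[N]mul1r -(distr_sum1 t S0) mulr_suml ler_sum // => S _.
by rewrite ler_wpM2l ?distr_ge0 // ler_nat max_card.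
Qed.

Lemma mean_card_step t S0 : mean_card t S0 + c * surv e delta r S0 t <= mean_card t.+1 S0.
Proof.
have -> : mean_card t.+1 S0 = \sum_S1 distr e delta r t S0 S1 * \sum_S P S1 S * #|S|%:R.
  rewrite /mean_card /=; under eq_bigr do rewrite mulr_suml.
  rewrite exchange_big; apply: eq_bigr => S1 _; rewrite mulr_sumr.
  by apply: eq_bigr => S _; rewrite mulrA.
have -> : surv e delta r S0 t = \sum_S distr e delta r t S0 S * (~~ absorbed S)%:R.
  by rewrite /surv big_mkcond; apply: eq_bigr => S _; case: ifP; rewrite ?mulr1 ?mulr0.
rewrite /mean_card mulr_sumr -big_split /=; apply: ler_sum => S1 _.
rewrite mulrCA -mulrDr ler_wpM2l ?distr_ge0 // -lerBrDl.
apply: le_trans (card_drift S1) _.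
by rewrite (eq_bigr _ (fun _ _ => mulrBr _ _ _)) sumrB -mulr_suml P_sum1 mul1r.
Qed.

Lemma sum_surv_le k S0 : c * \sum_(0 <= i < k) surv e delta r S0 i <= N.
Proof.
suff : mean_card 0 S0 + c * \sum_(0 <= i < k) surv e delta r S0 i <= mean_card k S0.
  by case/andP: (mean_card_bounds 0 S0); case/andP: (mean_card_bounds k S0); lra.
elim: k => [|k IH]; first by rewrite big_geq // mulr0 addr0.
rewrite big_nat_recr //= mulrDr addrA; apply: le_trans (mean_card_step k S0).
by rewrite lerD2r.
Qed.

Lemma AT_le S0 : 0 < c -> (AT e delta r S0 <= (N / c)%:E)%E.
Proof.
move=> c_gt0; apply: nneseries_ub => [t|k].
  by rewrite sumr_ge0 // => S _; exact: distr_ge0.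
by rewrite ler_pdivlMr // mulrC sum_surv_le.
Qed.

End AbsorptionTime.

Unset Implicit Arguments. Set Strict Implicit.

Theorem mainTheorem12 (R : realType) (T : finType) (e : rel T) (r : R) :
  simple_connected_graph e -> 1 < r ->
  (forall (S : {set T}) (u v : T),
      S != finset.set0 -> S != [set: T] -> e u v -> u \in S -> v \notin S ->
      psi_half e r S u v >= (r - 1) / (r * (NN R T) ^+ 3))
  /\
  (forall S0 : {set T},
      (AT e (2^-1) r S0 <= (r / (r - 1) * (NN R T) ^+ 4)%:E)%E).
Proof.
move=> [e_sym [e_irr e_conn]] r_gt1; have r_ge1 := ltW r_gt1; split.
  by move=> S u v _ _ euv _ _; exact: psi_half_ge_cube.
move=> S0; have [T_le1|T_gt1] := leqP #|T| 1.
  have surv0 t : surv e 2^-1 r S0 t = 0.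
    by rewrite /surv big_pred0 // => S; rewrite absorbed_card_le1.
  apply: nneseries_ub => [t|k]; rewrite ?surv0 // big1 //.
  by rewrite mulr_ge0 ?exprn_ge0 ?ler0n ?divr_ge0 ?subr_ge0 ?(ltW (lt_trans ltr01 r_gt1)).
have N_gt0 : 0 < NN R T by rewrite ltr0n (ltn_trans _ T_gt1).
have -> : r / (r - 1) * NN R T ^+ 4 = NN R T / ((r - 1) / (r * NN R T ^+ 3)).
  by field; rewrite ?mulf_neq0 ?expf_neq0 ?gt_eqF //; lra.
apply: AT_le => [S S'|S|S|].
- by apply: trans_ge0 => //; rewrite invr_ge0 ler0n invf_le1 ?ler1n.
- by apply: trans_sum1 (ltn_trans _ T_gt1) (connected_nbr e_conn T_gt1).
- exact: card_drift_half.
- by rewrite divr_gt0 ?mulr_gt0 ?exprn_gt0 ?subr_gt0 // (lt_trans ltr01 r_gt1).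
Qed.
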